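(* For every integer $d\ge 4$, there exist states $|\mu\rangle,|\lambda\rangle,|\bar\mu\rangle,|\bar\lambda\rangle\in\mathbb{C}^d\otimes\mathbb{C}^d$, all of full Schmidt rank $d$, with the following properties: (a) $|\mu\rangle\otimes|\lambda\rangle$ can be transformed into $|\bar\mu\rangle\otimes|\bar\lambda\rangle$ by a local unitary; (b) the transformation is non-trivial: it is not the case that ($|\bar\mu\rangle$ is LU-equivalent to $|\mu\rangle$ and $|\bar\lambda\rangle$ is LU-equivalent to $|\lambda\rangle$), and it is not the case that ($|\bar\mu\rangle$ is LU-equivalent to $|\lambda\rangle$ and $|\bar\lambda\rangle$ is LU-equivalent to $|\mu\rangle$).
   Context: The state $|\mu\rangle\otimes|\lambda\rangle$ is regarded as a bipartite state between two parties, each holding two $d$-dimensional subsystems. A local unitary is $U_A\otimes U_B$ with $U_A,U_B\in\mathrm{U}(d^2)$. Two bipartite states are LU-equivalent if they are related by a local unitary, equivalently if they have the same squared Schmidt coefficients up to reordering. *)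

(* Complex numbers C := complex R over Stdlib's reals R
   (an rcfType via Rstruct); bipartite pure states of C^m (x) C^n are
   represented by their m x n coefficient matrices. *)
From HB Require Import structures.
From mathcomp Require Import all_boot all_order all_algebra.
From mathcomp Require Import complex mxtens.
From mathcomp Require Import Rstruct.
Set Implicit Arguments. Unset Strict Implicit. Unset Printing Implicit Defensive.
Import Order.TTheory GRing.Theory Num.Theory.
Local Open Scope ring_scope.

Definition C : numClosedFieldType := (Rdefinitions.R)[i].

Definition adjmx {F : numClosedFieldType} {m n} (A : 'M[F]_(m, n)) : 'M[F]_(n, m) :=
  (map_mx Num.conj A)^T.

Definition unitary {F : numClosedFieldType} {n} (U : 'M[F]_n) : Prop :=
  U *m adjmx U = 1%:M.

(* A (normalized) state in C^m (x) C^n, given by its coefficient matrix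
   psi = sum_{ij} M i j |i>|j>. *)
Definition is_state {m n} (M : 'M[C]_(m, n)) : Prop :=
  \sum_(i < m) \sum_(j < n) `|M i j| ^+ 2 = 1.

Definition schmidt_rank {m n} (M : 'M[C]_(m, n)) : nat := \rank M.

(* Local-unitary equivalence: (U_A (x) U_B) psi = phi, i.e. U_A M U_B^T = N. *)
Definition LU_equiv {m n} (M N : 'M[C]_(m, n)) : Prop :=
  exists (UA : 'M[C]_m) (UB : 'M[C]_n),
    unitary UA /\ unitary UB /\ N = UA *m M *m UB^T.

(* |mu> (x) |lambda> viewed as a bipartite state between party A (holding the
   first subsystems of both) and party B (holding the second ones):
   coefficient matrix is the Kronecker product of the coefficient matrices. *)
Definition tens_state {d} (mu lam : 'M[C]_d) : 'M[C]_(d * d) := tensmx mu lam.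

(* Work with states in Schmidt form whose squared Schmidt coefficients are
   proportional to 4^k, k running over a multiset s of exponents.  The tensor
   product of two such states is again of this form, with exponent multiset
   the sumset s + t, and two such states are LU-equivalent exactly when their
   multisets of squared coefficients, i.e. the spectra of M M^dagger, agree.  Encoding a multiset by its
   generating polynomial, (a) becomes the polynomial identity
   P_mu P_lam = P_mub P_lamb, which holds although the exponent sets differ
   (d-1 occurs only in mub, d+1 only in lam); this gives (b). *)
From HB Require Import structures.
From mathcomp Require Import all_boot all_order all_algebra.
From mathcomp Require Import complex mxtens.
From mathcomp Require Import Rstruct.
From mathcomp Require Import perm ring zify.
Set Implicit Arguments. Unset Strict Implicit. Unset Printing Implicit Defensive.
Import Order.TTheory GRing.Theory Num.Theory.
Local Open Scope ring_scope.

Lemma nth_allpairs (S T R : Type) (f : S -> T -> R) x0 y0 z0 s t i j :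
  (i < size s)%N -> (j < size t)%N ->
  nth z0 [seq f x y | x <- s, y <- t] (i * size t + j) = f (nth x0 s i) (nth y0 t j).
Proof.
elim: s i => [//|x s IHs] [|i] /= ltis ltjt; rewrite nth_cat size_map.
  by rewrite mul0n add0n ltjt (nth_map y0).
by rewrite mulSn -addnA addKn ltnNge leq_addr /= IHs.
Qed.

Lemma perm_eq_nth (T : eqType) (x0 : T) d (s t : seq T) : size s = d -> perm_eq s t ->
  exists p : 'S_d, forall i : 'I_d, nth x0 t i = nth x0 s (p i).
Proof.
move=> <-; rewrite perm_sym => /(@tuple_permP _ _ t (in_tuple s))[p Ep]; exists p => i.
by rewrite Ep -(tnth_nth x0 [tuple _ | i < _]) tnth_mktuple (tnth_nth x0).
Qed.

Lemma prod_subr_eq0 (F : idomainType) (T : eqType) (f : T -> F) s (l : F) :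
  (\prod_(x <- s) (f x - l) == 0) = (l \in map f s).
Proof.
rewrite prodf_seq_eq0; apply/hasP/mapP => [[x xs]|[x xs ->]].
  by rewrite subr_eq0 => /eqP <-; exists x.
by exists x; rewrite //= subrr.
Qed.

Definition genpoly (s : seq nat) : {poly int} := \sum_(k <- s) 'X^k.

Lemma coef_genpoly s v : (genpoly s)`_v = (count_mem v s)%:R.
Proof.
rewrite coef_sum -sum1_count natr_sum [RHS]big_mkcond /=.
by apply: eq_bigr => k _; rewrite coefXn eq_sym; case: eqP.
Qed.

Lemma genpoly_perm_eq s t : genpoly s = genpoly t -> perm_eq s t.
Proof.
move=> Est; apply/allP => v _; apply/eqP.
by have /eqP := congr1 (coefp v) Est; rewrite /= !coef_genpoly eqr_nat => /eqP.
Qed.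

Lemma genpoly_allpairs s t :
  genpoly [seq x + y | x <- s, y <- t]%N = genpoly s * genpoly t.
Proof.
rewrite /genpoly big_allpairs_dep mulr_suml; apply: eq_bigr => x _.
by rewrite mulr_sumr; apply: eq_bigr => y _; rewrite exprD.
Qed.

Lemma genpoly_iota a m : genpoly (iota a m) = 'X^a * \sum_(i < m) 'X^i.
Proof.
rewrite /genpoly -{1}(addn0 a) iotaDl big_map.
rewrite -[in LHS](subn0 m) -/(index_iota 0 m) big_mkord.
by rewrite mulr_sumr; apply: eq_bigr => i _; rewrite exprD.
Qed.

Lemma perm_mx_unitary n (p : 'S_n) : unitary (perm_mx p : 'M[C]_n).
Proof. by rewrite /unitary /adjmx map_perm_mx tr_perm_mx -perm_mxM mulgV perm_mx1. Qed.

Lemma LU_equiv_diag_col_perm n (D : 'rV[C]_n) (p : 'S_n) :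
  LU_equiv (diag_mx D) (diag_mx (col_perm p D)).
Proof.
exists (perm_mx p), (perm_mx p).
split; first exact: perm_mx_unitary; split; first exact: perm_mx_unitary.
rewrite tr_perm_mx -row_permE -[(p^-1)%g]invgK -col_permE invgK.
by apply/matrixP => i j; rewrite !mxE (inj_eq perm_inj).
Qed.

Lemma adjmxM m n p (A : 'M[C]_(m, n)) (B : 'M[C]_(n, p)) :
  adjmx (A *m B) = adjmx B *m adjmx A.
Proof. by rewrite /adjmx map_mxM trmx_mul. Qed.

Lemma adjmx_tr m n (A : 'M[C]_(m, n)) : adjmx A^T = (adjmx A)^T.
Proof. by rewrite /adjmx -map_trmx. Qed.

Lemma LU_equiv_det_gram m (M N : 'M[C]_m) (l : C) : LU_equiv M N ->
  \det (N *m adjmx N - l%:M) = \det (M *m adjmx M - l%:M).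
Proof.
case=> [UA [UB [uA [uB ->]]]].
have uBT : UB^T *m adjmx UB^T = 1%:M by rewrite adjmx_tr -trmx_mul mulmx1C // trmx1.
have -> : UA *m M *m UB^T *m adjmx (UA *m M *m UB^T) - l%:M
        = UA *m (M *m adjmx M - l%:M) *m adjmx UA.
  rewrite !adjmxM !mulmxA -[UA *m M *m UB^T *m _]mulmxA uBT mulmx1.
  by rewrite mulmxBr mulmxBl mul_mx_scalar -scalemxAl uA scalemx1 !mulmxA.
by rewrite !det_mulmx mulrAC -det_mulmx uA det1 mul1r.
Qed.

Definition pow4sum (s : seq nat) : C := \sum_(k <- s) 4 ^+ k.

Definition sqcoef (s : seq nat) (k : nat) : C := 4 ^+ k / pow4sum s.

(* Meaningful only when size s = d: [nth] pads s with the exponent 0. *)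
Definition geom_state d (s : seq nat) : 'M[C]_d :=
  diag_mx (\row_(i < d) ((sqrtC (pow4sum s))^-1 * 2 ^+ nth 0 s i)).

Lemma pow4sum_ge0 s : 0 <= pow4sum s.
Proof. by rewrite /pow4sum sumr_ge0 // => k _; rewrite exprn_ge0. Qed.

Lemma pow4sum_gt0 s : s != [::] -> 0 < pow4sum s.
Proof.
case: s => // k s _; rewrite /pow4sum big_cons ltr_pwDl ?exprn_gt0 //.
by rewrite -/(pow4sum s) pow4sum_ge0.
Qed.

Lemma pow4sum_allpairs s t :
  pow4sum [seq x + y | x <- s, y <- t]%N = pow4sum s * pow4sum t.
Proof.
rewrite /pow4sum big_allpairs_dep mulr_suml; apply: eq_bigr => x _.
by rewrite mulr_sumr; apply: eq_bigr => y _; rewrite exprD.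
Qed.

Lemma sqr_norm_geom_coef s k : `|(sqrtC (pow4sum s))^-1 * 2 ^+ k| ^+ 2 = sqcoef s k.
Proof.
rewrite normrM normfV !ger0_norm ?exprn_ge0 ?sqrtC_ge0 ?pow4sum_ge0 //.
by rewrite exprMn exprVn sqrtCK exprAC -natrX mulrC.
Qed.

Lemma geom_coef_neq0 s k : s != [::] -> (sqrtC (pow4sum s))^-1 * 2 ^+ k != 0.
Proof.
move=> s_nil; rewrite mulf_neq0 ?expf_neq0 ?pnatr_eq0 //.
by rewrite invr_eq0 sqrtC_eq0 gt_eqF ?pow4sum_gt0.
Qed.

Lemma geom_state_is_state d s : size s = d -> (0 < d)%N -> is_state (geom_state d s).
Proof.
move=> <-; rewrite lt0n size_eq0 => s_nil; rewrite /is_state.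
transitivity (\sum_(k <- s) sqcoef s k); last first.
  by rewrite -mulr_suml mulfV // gt_eqF ?pow4sum_gt0.
rewrite (big_nth 0) big_mkord; apply: eq_bigr => i _.
rewrite (bigD1 i) //= big1 ?addr0 => [|j /negbTE ji].
  by rewrite !mxE eqxx mulr1n sqr_norm_geom_coef.
by rewrite !mxE eq_sym ji mulr0n normr0 expr0n.
Qed.

Lemma geom_state_rank d s : size s = d -> schmidt_rank (geom_state d s) = d.
Proof.
move=> size_s; rewrite /schmidt_rank mxrank_unit // unitmxE det_diag unitfE.
apply/prodf_neq0 => i _; rewrite mxE geom_coef_neq0 //.
by rewrite -size_eq0 size_s -lt0n (leq_ltn_trans _ (ltn_ord i)).
Qed.

Lemma det_gram_geom_state d s (l : C) : size s = d ->
  \det (geom_state d s *m adjmx (geom_state d s) - l%:M) = \prod_(k <- s) (sqcoef s k - l).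
Proof.
move=> <-; rewrite /adjmx map_diag_mx tr_diag_mx mulmx_diag -diag_const_mx -linearB.
rewrite det_diag (big_nth 0) big_mkord; apply: eq_bigr => i _.
by rewrite !mxE -normCK sqr_norm_geom_coef.
Qed.

Lemma tens_geom_state d s t : size s = d -> size t = d ->
  tens_state (geom_state d s) (geom_state d t) =
  geom_state (d * d) [seq x + y | x <- s, y <- t]%N.
Proof.
move=> size_s size_t; apply/matrixP => k l.
case: (mxtens_indexP k) => i j; case: (mxtens_indexP l) => i' j'.
rewrite /tens_state tensmxE !mxE (inj_eq (can_inj (@mxtens_indexK d d))) xpair_eqE /=.
have lt_is : (i < size s)%N by rewrite size_s.
have lt_jt : (j < size t)%N by rewrite size_t.
have := nth_allpairs (fun x y => (x + y)%N) 0 0 0 lt_is lt_jt; rewrite size_t => ->.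
rewrite pow4sum_allpairs sqrtCM ?nnegrE ?pow4sum_ge0 // invfM exprD.
by case: eqP; case: eqP => _ _; rewrite ?mulr1n ?mulr0n ?mulr0 ?mul0r // mulrACA.
Qed.

Lemma perm_eq_geom_state_LU d s t : size s = d -> perm_eq s t ->
  LU_equiv (geom_state d s) (geom_state d t).
Proof.
move=> size_s st; have [p Ep] := perm_eq_nth 0 size_s st.
have -> : geom_state d t =
    diag_mx (col_perm p (\row_(i < d) ((sqrtC (pow4sum s))^-1 * 2 ^+ nth 0 s i))).
  by congr diag_mx; apply/rowP => i; rewrite !mxE -Ep /pow4sum (perm_big _ st).
exact: LU_equiv_diag_col_perm.
Qed.

Lemma LU_equiv_geom_state_sqcoef d s t : size s = d -> size t = d ->
  LU_equiv (geom_state d s) (geom_state d t) -> map (sqcoef s) s =i map (sqcoef t) t.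
Proof.
move=> size_s size_t LUst l; rewrite -[LHS]prod_subr_eq0 -[RHS]prod_subr_eq0.
(* Rewriting [in RHS] spares Rocq a very slow attempt to unify the two diagonal matrices. *)
rewrite -(det_gram_geom_state l size_s) -[in RHS](det_gram_geom_state l size_t).
by rewrite [in RHS](LU_equiv_det_gram l LUst).
Qed.

Lemma sqcoef_inj s : s != [::] -> injective (sqcoef s).
Proof.
move=> s_nil a b /mulIf; rewrite invr_eq0 gt_eqF ?pow4sum_gt0 // => /(_ isT).
by rewrite -!natrX => /eqP; rewrite eqr_nat eqn_exp2l // => /eqP.
Qed.

Lemma pow4sum_le s t : 0 \in s -> sqcoef s 0 \in map (sqcoef t) t ->
  pow4sum s <= pow4sum t.
Proof.
move=> s0 /mapP[a ta]; rewrite /sqcoef expr0 mul1r => E.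
have pos_s : pow4sum s \is Num.pos.
  by rewrite posrE pow4sum_gt0 //; apply: contraTneq s0 => ->.
have pos_t : pow4sum t \is Num.pos.
  by rewrite posrE pow4sum_gt0 //; apply: contraTneq ta => ->.
rewrite -lef_pV2 // E ler_peMl ?invr_ge0 ?pow4sum_ge0 //.
by rewrite -natrX ler1n expn_gt0.
Qed.

Lemma sqcoef_eqi_exps s t : 0 \in s -> 0 \in t ->
  map (sqcoef s) s =i map (sqcoef t) t -> s =i t.
Proof.
move=> s0 t0 E.
(* Exponent 0 gives the smallest squared coefficient on each side, 1 / pow4sum. *)
have pow4sum_st : pow4sum s = pow4sum t.
  apply/le_anti; rewrite !pow4sum_le //; first by rewrite E map_f.
  by rewrite -E map_f.
have s_nil : s != [::] by apply: contraTneq s0 => ->.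
have t_nil : t != [::] by apply: contraTneq t0 => ->.
move=> k; rewrite -(mem_map (sqcoef_inj s_nil)) E -(mem_map (sqcoef_inj t_nil)).
by rewrite /sqcoef pow4sum_st.
Qed.

Lemma LU_equiv_geom_state_eqi d s t : size s = d -> size t = d -> 0 \in s -> 0 \in t ->
  LU_equiv (geom_state d s) (geom_state d t) -> s =i t.
Proof.
move=> size_s size_t s0 t0 /(LU_equiv_geom_state_sqcoef size_s size_t).
exact: sqcoef_eqi_exps.
Qed.

Definition mu_exps d := [:: 0, 1 & iota 0 (d - 2)]%N.
Definition lam_exps d := [:: 0, d.+1 & iota 2 (d - 2)]%N.
Definition mub_exps d := [:: 0, 3, 0, d.-1 & iota 2 (d - 4)]%N.
Definition lamb_exps d := iota 0 d.

Lemma size_exps d : (4 <= d)%N ->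
  [/\ size (mu_exps d) = d, size (lam_exps d) = d, size (mub_exps d) = d
    & size (lamb_exps d) = d].
Proof. by move=> /subnK <-; rewrite /= !size_iota !addnK !addn4. Qed.

Lemma genpoly_exps_mul d : (4 <= d)%N ->
  genpoly (mu_exps d) * genpoly (lam_exps d) =
  genpoly (mub_exps d) * genpoly (lamb_exps d).
Proof.
move=> /subnK <-; move: (d - 4)%N => n.
rewrite /mu_exps /lam_exps /mub_exps /lamb_exps !addnK !addn4 /=.
rewrite /genpoly !big_cons -!/(genpoly _) !genpoly_iota.
set x : {poly int} := 'X; set g := \sum_(i < n) x ^+ i.
(* [ring] does not know that g is a geometric sum; this relation is all it needs. *)
have Xn : x ^+ n = (x - 1) * g + 1 by rewrite -subrX1 subrK.
by rewrite !exprSr Xn; ring.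
Qed.

Lemma exps_separate d : (4 <= d)%N ->
  [/\ d.-1 \notin mu_exps d, d.-1 \in mub_exps d,
      d.+1 \in lam_exps d & d.+1 \notin mub_exps d].
Proof. by move=> hd; rewrite !inE !mem_iota; split; lia. Qed.

Theorem mainTheorem10 (d : nat) (hd : (4 <= d)%N) :
  exists mu lam mub lamb : 'M[C]_d,
    [/\ is_state mu, is_state lam, is_state mub & is_state lamb] /\
    [/\ schmidt_rank mu = d, schmidt_rank lam = d,
        schmidt_rank mub = d & schmidt_rank lamb = d] /\
    LU_equiv (tens_state mu lam) (tens_state mub lamb) /\
    ~ (LU_equiv mu mub /\ LU_equiv lam lamb) /\
    ~ (LU_equiv lam mub /\ LU_equiv mu lamb).
Proof.
have [size_mu size_lam size_mub size_lamb] := size_exps hd.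
have [mu_dm1 mub_dm1 lam_dp1 mub_dp1] := exps_separate hd.
have d_gt0 : (0 < d)%N by apply: leq_trans hd.
exists (geom_state d (mu_exps d)), (geom_state d (lam_exps d)),
  (geom_state d (mub_exps d)), (geom_state d (lamb_exps d)).
split; first by split; apply: geom_state_is_state.
split; first by split; apply: geom_state_rank.
split.
  rewrite !tens_geom_state //; apply: perm_eq_geom_state_LU.
    by rewrite size_allpairs size_mu size_lam.
  by apply: genpoly_perm_eq; rewrite !genpoly_allpairs genpoly_exps_mul.
split; case=> /LU_equiv_geom_state_eqi eq_exps _.
  have := eq_exps size_mu size_mub (mem_head _ _) (mem_head _ _) d.-1.
  by rewrite mub_dm1 (negbTE mu_dm1).
have := eq_exps size_lam size_mub (mem_head _ _) (mem_head _ _) d.+1.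
by rewrite lam_dp1 (negbTE mub_dp1).
Qed.
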